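(* Let $G'=(V',E')$ be a graph and let $G=(V,E)$ be a vertex-induced subgraph of $G'$ such that: (i) every $v\in V'\setminus V$ has $\deg(v)<n$ in $G'$; (ii) $\operatorname{col}_{ve}(G)=n$; and (iii) in the vertex-edge marking game on $G$, Alice has a strategy which, at the end of each of her turns, leaves no unmarked vertex incident to $n-1$ marked edges. Then $\operatorname{col}_{ve}(G')=n$.
   Context: The vertex-edge marking game on a graph $G=(V,E)$ (finite or infinite) is played by Alice, who marks vertices, and Bob, who marks edges. Initially nothing is marked. The game proceeds in rounds $r=1,2,\dots$; in each round Alice first marks one unmarked vertex, then Bob marks one unmarked edge. For a finite graph the game ends when either player has no move; for an infinite graph it continues forever. After round $r$, the vertex score of $v$ is $0$ if $v$ is marked, and otherwise the number of marked edges incident to $v$. The $r$-round score is the supremum over $v\in V$ of the vertex scores after round $r$, and the final score of the game is the supremum of the $r$-round scores over all rounds. Bob has a winning strategy for score $s$ if, whatever Alice plays, Bob can force the final score to be at least $s$. The vertex-edge coloring number is $\operatorname{col}_{ve}(G)=\sup\{s : \text{Bob has a winning strategy for score } s\}+1$. *)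

From Stdlib Require Import List Arith ClassicalEpsilon.
Import ListNotations.

(** A simple graph: vertex type with a symmetric irreflexive adjacency relation.
    The edge {u,v} is represented by either ordered pair (u,v) / (v,u). *)
Record graph := Graph {
  gV :> Type;
  adj : gV -> gV -> Prop;
  adj_sym : forall u v, adj u v -> adj v u;
  adj_irrefl : forall v, ~ adj v v }.

Definition induced (G : graph) (P : G -> Prop) : graph.
Proof.
  refine (@Graph {v : G | P v} (fun u w => adj G (proj1_sig u) (proj1_sig w)) _ _).
  - intros u w H; exact (adj_sym G _ _ H).
  - intros v; exact (adj_irrefl G _).
Defined.

Definition deg_lt (G : graph) (v : G) (n : nat) : Prop :=
  exists l : list G, NoDup l /\ (forall u, adj G v u <-> In u l) /\ length l < n.

(** One round: Alice's vertex move and Bob's edge move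
    (None = the player has no legal move, i.e. the game has ended for them). *)
Definition round (G : graph) : Type := (option G * option (G * G))%type.
Definition history (G : graph) : Type := list (round G).

Definition vmarked {G : graph} (h : history G) (v : G) : Prop :=
  exists b, In (Some v, b) h.

Definition emarked {G : graph} (h : history G) (x y : G) : Prop :=
  exists a u w, In (a, Some (u, w)) h /\ ((u = x /\ w = y) \/ (u = y /\ w = x)).

Definition legalA {G : graph} (h : history G) (a : option G) : Prop :=
  match a with
  | Some v => ~ vmarked h v
  | None => forall v, vmarked h v
  end.

Definition legalB {G : graph} (h : history G) (b : option (G * G)) : Prop :=
  match b with
  | Some (x, y) => adj G x y /\ ~ emarked h x y
  | None => forall x y, adj G x y -> emarked h x y
  end.

Definition ind (P : Prop) : nat :=
  if excluded_middle_informative P then 1 else 0.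

Fixpoint nmarked_inc {G : graph} (h : history G) (v : G) : nat :=
  match h with
  | [] => 0
  | (_, Some (x, y)) :: t => ind (x = v \/ y = v) + nmarked_inc t v
  | (_, None) :: t => nmarked_inc t v
  end.

Definition vscore {G : graph} (h : history G) (v : G) : nat :=
  if excluded_middle_informative (vmarked h v) then 0 else nmarked_inc h v.

Definition AliceStrat (G : graph) : Type := history G -> option G.
Definition BobStrat (G : graph) : Type := history G -> option G -> option (G * G).

Fixpoint play {G : graph} (sA : AliceStrat G) (sB : BobStrat G) (r : nat) : history G :=
  match r with
  | 0 => []
  | S r' => let h := play sA sB r' in h ++ [(sA h, sB h (sA h))]
  end.

Definition play_afterA {G : graph} (sA : AliceStrat G) (sB : BobStrat G) (r : nat) : history G :=
  let h := play sA sB r in h ++ [(sA h, None)].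

(** Bob has a winning strategy for score s: a strategy that is legal as long as
    Alice plays legally, and forces the final score (sup over rounds r of the
    sup over v of the vertex scores after round r) to be at least s. *)
Definition bob_wins (G : graph) (s : nat) : Prop :=
  exists sB : BobStrat G, forall sA : AliceStrat G,
    (forall r, (forall k, k <= r -> legalA (play sA sB k) (sA (play sA sB k))) ->
       legalB (play sA sB r) (sB (play sA sB r) (sA (play sA sB r)))) /\
    ((forall k, legalA (play sA sB k) (sA (play sA sB k))) ->
       exists r v, s <= vscore (play sA sB r) v).

(** col_ve(G) = n, i.e. n = sup{s : Bob wins s} + 1 (the sup being a finite max). *)
Definition col_ve_is (G : graph) (n : nat) : Prop :=
  exists m, n = m + 1 /\ bob_wins G m /\ (forall s, bob_wins G s -> s <= m).

Definition alice_keeps_below (G : graph) (n : nat) : Prop :=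
  exists sA : AliceStrat G, forall sB : BobStrat G, forall r,
    (forall k, k < r -> legalB (play sA sB k) (sB (play sA sB k) (sA (play sA sB k)))) ->
    legalA (play sA sB r) (sA (play sA sB r)) /\
    (forall v, ~ vmarked (play_afterA sA sB r) v ->
       nmarked_inc (play_afterA sA sB r) v <> n - 1).

From Stdlib Require Import List Arith Lia ClassicalEpsilon Classical.
Import ListNotations.

(* Bob transfers a winning strategy from G to G' by simulating the game on G:
   Alice's moves that are not unmarked vertices of G are replaced by arbitrary
   legal moves in the simulation, and the simulated edges are played in G'.
   Conversely, Alice plays her strategy for G against the edges Bob marks
   inside G; whenever Bob marks an edge leaving G, she answers by marking its
   endpoint in G. So an unmarked vertex of G carries at most one marked edge
   leaving G, and only just after Bob marked it, at a moment when Alice's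
   strategy guarantees at most n - 2 marked edges inside G there. Vertices
   outside G have degree below n, hence no vertex ever reaches score n. *)

Lemma ind_true (Q : Prop) : Q -> ind Q = 1.
Proof. intros HQ; unfold ind; destruct (excluded_middle_informative Q); tauto. Qed.

Lemma ind_false (Q : Prop) : ~ Q -> ind Q = 0.
Proof. intros HQ; unfold ind; destruct (excluded_middle_informative Q); tauto. Qed.

Lemma ind_le1 (Q : Prop) : ind Q <= 1.
Proof. unfold ind; destruct (excluded_middle_informative Q); lia. Qed.

Lemma ind_iff (Q R : Prop) : (Q <-> R) -> ind Q = ind R.
Proof.
  intros HQR; unfold ind.
  destruct (excluded_middle_informative Q), (excluded_middle_informative R); tauto.
Qed.

Lemma ind_impl (Q R : Prop) : (Q -> R) -> ind Q <= ind R.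
Proof.
  intros HQR; unfold ind.
  destruct (excluded_middle_informative Q), (excluded_middle_informative R); tauto || lia.
Qed.

Section Histories.
Context {G : graph}.
Implicit Types (h : history G) (v : G).

Definition nmarked_move (b : option (G * G)) v : nat :=
  match b with Some (x, y) => ind (x = v \/ y = v) | None => 0 end.

Lemma nmarked_move_le1 b v : nmarked_move b v <= 1.
Proof. destruct b as [[x y]|]; simpl; [apply ind_le1|lia]. Qed.

Lemma nmarked_inc_snoc h (r : round G) v :
  nmarked_inc (h ++ [r]) v = nmarked_inc h v + nmarked_move (snd r) v.
Proof.
  destruct r as [a b].
  induction h as [|[a' [[x y]|]] h IH]; simpl in *; try rewrite IH;
    destruct b as [[x' y']|]; simpl; lia.
Qed.

Lemma vmarked_snoc h (r : round G) v :
  vmarked (h ++ [r]) v <-> vmarked h v \/ fst r = Some v.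
Proof.
  destruct r as [a b]; unfold vmarked; simpl; split.
  - intros [b' Hin]; apply in_app_or in Hin as [Hin|[Hin|[]]]; [left; eauto|right; congruence].
  - intros [[b' Hin]| ->]; [exists b'|exists b]; apply in_or_app; simpl; auto.
Qed.

Lemma vmarked_snoc_move h (a : option G) b b' v :
  vmarked (h ++ [(a, b) : round G]) v -> vmarked (h ++ [(a, b') : round G]) v.
Proof. rewrite !vmarked_snoc; auto. Qed.

Lemma emarked_snoc h (r : round G) x y :
  emarked (h ++ [r]) x y <-> emarked h x y \/
    exists u w, snd r = Some (u, w) /\ ((u = x /\ w = y) \/ (u = y /\ w = x)).
Proof.
  destruct r as [a b]; unfold emarked; simpl; split.
  - intros (a' & u & w & Hin & E); apply in_app_or in Hin as [Hin|[Hin|[]]].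
    + left; eauto 6.
    + right; exists u, w; split; [congruence|auto].
  - intros [(a' & u & w & Hin & E)|(u & w & -> & E)].
    + exists a', u, w; split; auto; apply in_or_app; auto.
    + exists a, u, w; split; auto; apply in_or_app; simpl; auto.
Qed.

Lemma vscore_unmarked h v : ~ vmarked h v -> vscore h v = nmarked_inc h v.
Proof. intros Hv; unfold vscore; destruct (excluded_middle_informative _); tauto. Qed.

Lemma vscore_marked h v : vmarked h v -> vscore h v = 0.
Proof. intros Hv; unfold vscore; destruct (excluded_middle_informative _); tauto. Qed.

Lemma vscore_le h v : vscore h v <= nmarked_inc h v.
Proof. unfold vscore; destruct (excluded_middle_informative _); lia. Qed.

Lemma play_succ (sA : AliceStrat G) (sB : BobStrat G) r :
  play sA sB (S r) =
  play sA sB r ++ [(sA (play sA sB r), sB (play sA sB r) (sA (play sA sB r))) : round G].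
Proof. reflexivity. Qed.

Lemma length_play (sA : AliceStrat G) (sB : BobStrat G) r : length (play sA sB r) = r.
Proof. induction r as [|r IH]; simpl; auto. rewrite length_app, IH; simpl; lia. Qed.

Definition some_vertex h : option G :=
  match excluded_middle_informative (exists v, ~ vmarked h v) with
  | left e => Some (proj1_sig (constructive_indefinite_description _ e))
  | right _ => None
  end.

Lemma some_vertex_legal h : legalA h (some_vertex h).
Proof.
  unfold some_vertex; destruct (excluded_middle_informative _) as [e|ne]; simpl.
  - exact (proj2_sig (constructive_indefinite_description _ e)).
  - intros v; apply NNPP; intros Hv; apply ne; eauto.
Qed.

Definition some_edge h : option (G * G) :=
  match excluded_middle_informative
          (exists p : G * G, adj G (fst p) (snd p) /\ ~ emarked h (fst p) (snd p)) with
  | left e => Some (proj1_sig (constructive_indefinite_description _ e))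
  | right _ => None
  end.

Lemma some_edge_legal h : legalB h (some_edge h).
Proof.
  unfold some_edge; destruct (excluded_middle_informative _) as [e|ne]; simpl.
  - destruct (constructive_indefinite_description _ e) as [[x y] Hxy]; exact Hxy.
  - intros x y Hxy; apply NNPP; intros Hm; apply ne; exists (x, y); auto.
Qed.

End Histories.

Section DegreeBound.
Context {G : graph}.

Inductive bob_legal : history G -> Prop :=
| bob_legal_nil : bob_legal []
| bob_legal_snoc h (r : round G) : bob_legal h -> legalB h (snd r) -> bob_legal (h ++ [r]).

Definition move_nbrs (b : option (G * G)) (w : G) : list G :=
  match b with
  | Some (x, y) => if excluded_middle_informative (x = w) then [y]
                   else if excluded_middle_informative (y = w) then [x] else []
  | None => []
  end.

Fixpoint marked_nbrs (h : history G) (w : G) : list G :=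
  match h with
  | [] => []
  | (_, b) :: t => move_nbrs b w ++ marked_nbrs t w
  end.

Lemma marked_nbrs_snoc h (r : round G) w :
  marked_nbrs (h ++ [r]) w = marked_nbrs h w ++ move_nbrs (snd r) w.
Proof.
  destruct r as [a b]; induction h as [|[a' b'] h IH]; simpl.
  - now rewrite app_nil_r.
  - now rewrite IH, app_assoc.
Qed.

Lemma in_move_nbrs x y w u :
  In u (move_nbrs (Some (x, y)) w) -> (x = w /\ u = y) \/ (y = w /\ u = x).
Proof.
  simpl; destruct (excluded_middle_informative (x = w)); [intros [->|[]]; auto|].
  destruct (excluded_middle_informative (y = w)); simpl; [intros [->|[]]; auto|tauto].
Qed.

Lemma length_marked_nbrs h w : length (marked_nbrs h w) = nmarked_inc h w.
Proof.
  induction h as [|[a [[x y]|]] h IH]; simpl; auto.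
  rewrite length_app, IH; f_equal.
  destruct (excluded_middle_informative (x = w)); [now rewrite ind_true by auto|].
  destruct (excluded_middle_informative (y = w)); [now rewrite ind_true by auto|].
  rewrite ind_false; tauto.
Qed.

Lemma in_marked_nbrs h w u : In u (marked_nbrs h w) -> emarked h w u.
Proof.
  induction h as [|[a b] h IH]; simpl; [tauto|].
  intros Hu; apply in_app_or in Hu as [Hu|Hu].
  - destruct b as [[x y]|]; [|destruct Hu].
    exists a, x, y; split; [now left|].
    apply in_move_nbrs in Hu as [[-> ->]|[-> ->]]; auto.
  - destruct (IH Hu) as (a' & x & y & Hin & E); exists a', x, y; split; auto; now right.
Qed.

Lemma marked_nbrs_adj h w u : bob_legal h -> In u (marked_nbrs h w) -> adj G w u.
Proof.
  induction 1 as [|h [a b] Hh IH Hb]; simpl; [tauto|].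
  rewrite marked_nbrs_snoc; intros Hu; apply in_app_or in Hu as [Hu|Hu]; auto.
  destruct b as [[x y]|]; [|destruct Hu].
  destruct Hb as [Hxy _].
  apply in_move_nbrs in Hu as [[-> ->]|[-> ->]]; auto using adj_sym.
Qed.

Lemma marked_nbrs_NoDup h w : bob_legal h -> NoDup (marked_nbrs h w).
Proof.
  induction 1 as [|h [a b] Hh IH Hb]; simpl; [constructor|].
  rewrite marked_nbrs_snoc; apply NoDup_app; auto.
  - destruct b as [[x y]|]; simpl; [|constructor].
    destruct (excluded_middle_informative (x = w)); [repeat constructor; auto|].
    destruct (excluded_middle_informative (y = w)); repeat constructor; auto.
  - intros u Hu Hu'; apply in_marked_nbrs in Hu.
    destruct b as [[x y]|]; [|destruct Hu'].
    apply (proj2 Hb); destruct Hu as (a' & p & q & Hin & E).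
    apply in_move_nbrs in Hu' as [[-> ->]|[-> ->]]; exists a', p, q; split; auto; tauto.
Qed.

Lemma nmarked_inc_lt_deg h w n : bob_legal h -> deg_lt G w n -> nmarked_inc h w < n.
Proof.
  intros Hh (l & _ & Hl & Hlen); rewrite <- length_marked_nbrs.
  enough (length (marked_nbrs h w) <= length l) by lia.
  apply NoDup_incl_length; [now apply marked_nbrs_NoDup|].
  intros u Hu; apply Hl; eapply marked_nbrs_adj; eauto.
Qed.

End DegreeBound.

Section KeepsBelow.
Context {G : graph} (sA : AliceStrat G) (n : nat).

Definition keeps_below_by : Prop := forall sB : BobStrat G, forall r,
  (forall k, k < r -> legalB (play sA sB k) (sB (play sA sB k) (sA (play sA sB k)))) ->
  forall v, ~ vmarked (play_afterA sA sB r) v -> nmarked_inc (play_afterA sA sB r) v <> n - 1.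

Inductive alice_reachable : history G -> Prop :=
| reachable_nil : alice_reachable []
| reachable_snoc L b :
    alice_reachable L -> legalB L b -> alice_reachable (L ++ [(sA L, b) : round G]).

Definition replay_bob (L : history G) : BobStrat G :=
  fun s _ => snd (nth (length s) L ((None, None) : round G)).

Lemma replay_bob_play L L' : alice_reachable L ->
  let sB := replay_bob (L ++ L') in
  play sA sB (length L) = L /\
  forall k, k < length L -> legalB (play sA sB k) (sB (play sA sB k) (sA (play sA sB k))).
Proof.
  intros HL; revert L'; induction HL as [|L b HL IH Hb]; intros L' sB;
    [split; [reflexivity|simpl; lia]|].
  destruct (IH ([(sA L, b) : round G] ++ L')) as [HplayL Hleg].
  rewrite app_assoc in HplayL, Hleg; fold sB in HplayL, Hleg.
  assert (Hb' : sB L (sA L) = b)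
    by (unfold sB, replay_bob; rewrite <- app_assoc; exact (f_equal snd (nth_middle L L' _ _))).
  rewrite length_app, Nat.add_1_r; split.
  - now rewrite play_succ, HplayL, Hb'.
  - intros k Hk; destruct (Nat.eq_dec k (length L)) as [->|Hne]; [now rewrite HplayL, Hb'|].
    apply Hleg; lia.
Qed.

Hypothesis keeps_below : keeps_below_by.

Lemma reachable_keeps_below L v : alice_reachable L ->
  ~ vmarked (L ++ [(sA L, None) : round G]) v -> nmarked_inc L v <> n - 1.
Proof.
  intros HL Hv; destruct (replay_bob_play L [] HL) as [HplayL Hleg].
  specialize (keeps_below _ _ Hleg v); unfold play_afterA in keeps_below.
  rewrite HplayL, (@nmarked_inc_snoc G) in keeps_below; simpl in keeps_below.
  specialize (keeps_below Hv); lia.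
Qed.

(** The count at an unmarked vertex grows by at most one per round and never
    takes the value [n - 1] after Alice's move, so it stays below [n - 1]. *)
Lemma reachable_nmarked_afterA L v : alice_reachable L ->
  ~ vmarked (L ++ [(sA L, None) : round G]) v -> nmarked_inc L v + 2 <= n.
Proof.
  intros HL; revert v; induction HL as [|L b HL IH Hb]; intros v Hv.
  - pose proof (reachable_keeps_below [] v reachable_nil Hv); simpl in *; lia.
  - pose proof (reachable_keeps_below _ v (reachable_snoc L b HL Hb) Hv) as Hne.
    assert (Hv' : ~ vmarked (L ++ [(sA L, None) : round G]) v)
      by (intros Hc; apply Hv, vmarked_snoc; left; eapply vmarked_snoc_move, Hc).
    specialize (IH v Hv'); rewrite nmarked_inc_snoc in Hne |- *; simpl snd in *.
    pose proof (nmarked_move_le1 b v); lia.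
Qed.

Lemma reachable_nmarked L v : 1 <= n -> alice_reachable L -> ~ vmarked L v -> nmarked_inc L v < n.
Proof.
  intros Hn; destruct 1 as [|L b HL Hb]; intros Hv; [simpl; lia|].
  assert (Hv' : ~ vmarked (L ++ [(sA L, None) : round G]) v)
    by (intros Hc; eapply Hv, vmarked_snoc_move, Hc).
  pose proof (reachable_nmarked_afterA L v HL Hv') as Hle.
  rewrite nmarked_inc_snoc; pose proof (nmarked_move_le1 b v); simpl snd; lia.
Qed.

End KeepsBelow.

Section Induced.
Variables (G : graph) (P : G -> Prop).
Local Notation GP := (induced G P).

Definition emb (v : GP) : G := proj1_sig v.

Lemma emb_inj (u v : GP) : emb u = emb v -> u = v.
Proof.
  destruct u as [u pu], v as [v pv]; unfold emb; simpl; intros <-.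
  f_equal; apply proof_irrelevance.
Qed.

Lemma emb_exist (x : G) (px : P x) (v : GP) : (exist P x px : GP) = v <-> x = emb v.
Proof. split; [now intros <-|intros E; apply emb_inj; now rewrite <- E]. Qed.

Definition restrict_move (s : history GP) (a : option G) : option GP :=
  match a with
  | Some x =>
      match excluded_middle_informative (P x) with
      | left px => if excluded_middle_informative (vmarked s (exist P x px : GP))
                   then some_vertex s else Some (exist P x px)
      | right _ => some_vertex s
      end
  | None => some_vertex s
  end.

Lemma restrict_move_legal s a : legalA s (restrict_move s a).
Proof.
  destruct a as [x|]; simpl; [|apply some_vertex_legal].
  destruct (excluded_middle_informative (P x)) as [px|]; [|apply some_vertex_legal].
  destruct (excluded_middle_informative _); [apply some_vertex_legal|simpl; auto].
Qed.

Lemma restrict_move_marks s (v : GP) :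
  vmarked (s ++ [(restrict_move s (Some (emb v)), None)]) v.
Proof.
  apply vmarked_snoc; destruct v as [x px]; unfold emb; simpl.
  destruct (excluded_middle_informative (P x)) as [px'|]; [|tauto].
  replace px' with px by apply proof_irrelevance.
  destruct (excluded_middle_informative _); auto.
Qed.

Section LiftBob.
Variable sBG : BobStrat GP.

Definition restrict_hist (h : history G) : history GP :=
  fold_left (fun s r => s ++ [(restrict_move s (fst r), sBG s (restrict_move s (fst r)))]) h [].

Lemma restrict_hist_snoc h (r : round G) :
  restrict_hist (h ++ [r]) =
  restrict_hist h ++ [(restrict_move (restrict_hist h) (fst r),
                       sBG (restrict_hist h) (restrict_move (restrict_hist h) (fst r))) : round GP].
Proof. unfold restrict_hist; now rewrite fold_left_app. Qed.

Lemma restrict_hist_vmarked h (v : GP) : vmarked h (emb v) -> vmarked (restrict_hist h) v.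
Proof.
  induction h as [|r h IH] using rev_ind; [intros [b []]|].
  rewrite restrict_hist_snoc, !vmarked_snoc; simpl.
  intros [Hv|Hv]; [auto|]; rewrite Hv.
  pose proof (restrict_move_marks (restrict_hist h) v) as Hm; apply vmarked_snoc in Hm; auto.
Qed.

Definition lift_bob : BobStrat G :=
  fun h a => match sBG (restrict_hist h) (restrict_move (restrict_hist h) a) with
             | Some (x, y) => Some (emb x, emb y)
             | None => some_edge h
             end.

Lemma lift_bob_some h a x y :
  sBG (restrict_hist h) (restrict_move (restrict_hist h) a) = Some (x, y) ->
  lift_bob h a = Some (emb x, emb y).
Proof. intros Hs; unfold lift_bob; now rewrite Hs. Qed.

Lemma lift_bob_none h a :
  sBG (restrict_hist h) (restrict_move (restrict_hist h) a) = None -> lift_bob h a = some_edge h.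
Proof. intros Hs; unfold lift_bob; now rewrite Hs. Qed.

(* Only meaningful on the simulated play, whose length is the current round. *)
Definition restrict_alice (sA : AliceStrat G) : AliceStrat GP :=
  fun s => restrict_move s (sA (play sA lift_bob (length s))).

Lemma restrict_alice_play sA r :
  restrict_alice sA (play (restrict_alice sA) sBG r) =
  restrict_move (play (restrict_alice sA) sBG r) (sA (play sA lift_bob r)).
Proof. unfold restrict_alice at 1; now rewrite length_play. Qed.

Lemma restrict_play sA r :
  restrict_hist (play sA lift_bob r) = play (restrict_alice sA) sBG r.
Proof.
  induction r as [|r IH]; [reflexivity|].
  rewrite !play_succ, restrict_hist_snoc, IH, restrict_alice_play; reflexivity.
Qed.

Section Play.
Variable sA : AliceStrat G.
Local Notation game r := (play sA lift_bob r).
Local Notation sim_move r :=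
  (sBG (restrict_hist (game r)) (restrict_move (restrict_hist (game r)) (sA (game r)))).

Hypothesis sim_legal : forall r, legalB (restrict_hist (game r)) (sim_move r).

Lemma restrict_play_emarked r (x y : GP) :
  emarked (game r) (emb x) (emb y) -> emarked (restrict_hist (game r)) x y.
Proof.
  induction r as [|r IH]; [intros (a & u & w & [] & _)|].
  rewrite play_succ, restrict_hist_snoc, !emarked_snoc; simpl.
  intros [Hxy|(u & w & Hb & E)]; [auto|].
  destruct (sim_move r) as [[x' y']|] eqn:Hs.
  - rewrite (lift_bob_some _ _ _ _ Hs) in Hb.
    right; injection Hb as <- <-; exists x', y'; split; auto.
    destruct E as [[E1 E2]|[E1 E2]]; apply emb_inj in E1, E2; subst; auto.
  - left; pose proof (sim_legal r) as Hnone; rewrite Hs in Hnone; apply Hnone.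
    rewrite (lift_bob_none _ _ Hs) in Hb.
    pose proof (some_edge_legal (game r)) as Hsome; rewrite Hb in Hsome.
    destruct Hsome as [Huw _], E as [[-> ->]|[-> ->]]; [exact Huw|exact (adj_sym G _ _ Huw)].
Qed.

Lemma restrict_play_nmarked_le r (v : GP) :
  nmarked_inc (restrict_hist (game r)) v <= nmarked_inc (game r) (emb v).
Proof.
  induction r as [|r IH]; [simpl; lia|].
  rewrite play_succ, restrict_hist_snoc, !nmarked_inc_snoc; simpl snd.
  enough (nmarked_move (sim_move r) v <= nmarked_move (lift_bob (game r) (sA (game r))) (emb v))
    by lia.
  destruct (sim_move r) as [[x y]|] eqn:Hs; simpl; [|lia].
  rewrite (lift_bob_some _ _ _ _ Hs); apply ind_impl; intros [<-|<-]; auto.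
Qed.

Lemma lift_bob_legal r : legalB (game r) (lift_bob (game r) (sA (game r))).
Proof.
  pose proof (sim_legal r) as Hleg.
  destruct (sim_move r) as [[x y]|] eqn:Hs;
    [|rewrite (lift_bob_none _ _ Hs); apply some_edge_legal].
  rewrite (lift_bob_some _ _ _ _ Hs); destruct Hleg as [Hxy Hm]; split; [exact Hxy|].
  intros Hc; apply Hm, restrict_play_emarked, Hc.
Qed.

Lemma lift_bob_vscore r (v : GP) :
  vscore (restrict_hist (game r)) v <= vscore (game r) (emb v).
Proof.
  destruct (classic (vmarked (restrict_hist (game r)) v)) as [Hm|Hm].
  - rewrite vscore_marked by exact Hm; lia.
  - rewrite !vscore_unmarked by auto using restrict_hist_vmarked.
    apply restrict_play_nmarked_le.
Qed.

End Play.

End LiftBob.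

Lemma bob_wins_lift m : bob_wins GP m -> bob_wins G m.
Proof.
  intros [sBG HsBG]; exists (lift_bob sBG); intros sA.
  destruct (HsBG (restrict_alice sBG sA)) as [Hleg Hwin].
  assert (Halice : forall k, legalA (play (restrict_alice sBG sA) sBG k)
                      (restrict_alice sBG sA (play (restrict_alice sBG sA) sBG k)))
    by (intros k; apply restrict_move_legal).
  assert (Hsim : forall r,
    let s := restrict_hist sBG (play sA (lift_bob sBG) r) in
    legalB s (sBG s (restrict_move s (sA (play sA (lift_bob sBG) r))))).
  { intros r s; unfold s; rewrite restrict_play, <- restrict_alice_play.
    exact (Hleg r (fun k _ => Halice k)). }
  split.
  - intros r _; exact (lift_bob_legal sBG sA Hsim r).
  - intros _; destruct (Hwin Halice) as (r & v & Hv); exists r, (emb v).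
    rewrite <- restrict_play in Hv.
    pose proof (lift_bob_vscore sBG sA r v); lia.
Qed.

Section LiftAlice.
Variable sAG : AliceStrat GP.

Definition lift_move (h : history G) (a : option GP) : option G :=
  match a with
  | Some v =>
      if excluded_middle_informative (vmarked h (emb v)) then some_vertex h else Some (emb v)
  | None => some_vertex h
  end.

Definition last_edge (h : history G) : option (G * G) := snd (last h (None, None)).

Definition mark_endpoint (h : history G) : option G :=
  match last_edge h with
  | Some (x, y) =>
      if excluded_middle_informative (P x /\ ~ vmarked h x) then Some x
      else if excluded_middle_informative (P y /\ ~ vmarked h y) then Some y
      else some_vertex h
  | None => some_vertex h
  end.

(** The state is the simulated game on [GP] together with a flag telling
    whether Alice's simulated move has already been played in [G]: after Bob
    marks an edge leaving [GP] the simulation stalls, and Alice's next move is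
    spent on the endpoint of that edge in [GP]. *)
Definition shadow_step (st : history GP * bool) (b : option (G * G)) : history GP * bool :=
  let L := fst st in
  match b with
  | Some (x, y) =>
      match excluded_middle_informative (P x), excluded_middle_informative (P y) with
      | left px, left py => (L ++ [(sAG L, Some (exist P x px, exist P y py)) : round GP], false)
      | _, _ => (L, true)
      end
  | None => (L ++ [(sAG L, None) : round GP], false)
  end.

Definition shadow (h : history G) : history GP * bool :=
  fold_left (fun st r => shadow_step st (snd r)) h ([], false).

Lemma shadow_snoc h (r : round G) : shadow (h ++ [r]) = shadow_step (shadow h) (snd r).
Proof. unfold shadow; now rewrite fold_left_app. Qed.

Definition lift_alice : AliceStrat G :=
  fun h => if snd (shadow h) then mark_endpoint h else lift_move h (sAG (fst (shadow h))).

Lemma lift_alice_legal h : legalA h (lift_alice h).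
Proof.
  unfold lift_alice, mark_endpoint, lift_move; destruct (snd (shadow h)).
  - destruct (last_edge h) as [[x y]|]; [|apply some_vertex_legal].
    destruct (excluded_middle_informative (P x /\ _)) as [[_ Hx]|]; [exact Hx|].
    destruct (excluded_middle_informative (P y /\ _)) as [[_ Hy]|]; [exact Hy|].
    apply some_vertex_legal.
  - destruct (sAG _) as [v|]; [|apply some_vertex_legal].
    destruct (excluded_middle_informative _); [apply some_vertex_legal|simpl; auto].
Qed.

Definition out_move (b : option (G * G)) (w : G) : nat :=
  match b with Some (x, y) => ind (~ (P x /\ P y) /\ (x = w \/ y = w)) | None => 0 end.

Fixpoint nmarked_out (h : history G) (w : G) : nat :=
  match h with
  | [] => 0
  | (_, b) :: t => out_move b w + nmarked_out t w
  end.

Lemma out_move_le1 b w : out_move b w <= 1.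
Proof. destruct b as [[x y]|]; simpl; [apply ind_le1|lia]. Qed.

Lemma nmarked_out_snoc h (r : round G) w :
  nmarked_out (h ++ [r]) w = nmarked_out h w + out_move (snd r) w.
Proof. destruct r as [a b]; induction h as [|[a' b'] h IH]; simpl in *; [lia|rewrite IH; lia]. Qed.

Lemma last_edge_snoc h (r : round G) : last_edge (h ++ [r]) = snd r.
Proof. unfold last_edge; now rewrite last_last. Qed.

Lemma mark_endpoint_marks h w :
  P w -> ~ vmarked h w -> out_move (last_edge h) w = 1 -> mark_endpoint h = Some w.
Proof.
  intros Pw Hw; unfold mark_endpoint; destruct (last_edge h) as [[x y]|]; simpl; [|discriminate].
  intros Hout; assert (Hxy : ~ (P x /\ P y) /\ (x = w \/ y = w))
    by (apply NNPP; intros Hc; now rewrite ind_false in Hout).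
  destruct Hxy as [Hout' [<-|<-]].
  - destruct (excluded_middle_informative (P x /\ ~ vmarked h x)); tauto.
  - destruct (excluded_middle_informative (P x /\ ~ vmarked h x)) as [[Px _]|]; [tauto|].
    destruct (excluded_middle_informative (P y /\ ~ vmarked h y)); tauto.
Qed.

Record shadows (h : history G) (L : history GP) (pend : bool) : Prop := {
  shadow_reachable : alice_reachable sAG L;
  shadow_legal : bob_legal h;
  shadow_vmarked : forall v, vmarked L v \/ (pend = true /\ sAG L = Some v) -> vmarked h (emb v);
  shadow_emarked : forall x y, emarked h (emb x) (emb y) <-> emarked L x y;
  shadow_nmarked : forall v, nmarked_inc h (emb v) = nmarked_inc L v + nmarked_out h (emb v);
  shadow_out : forall v, ~ vmarked h (emb v) ->
    nmarked_out h (emb v) <= if pend then out_move (last_edge h) (emb v) else 0 }.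

Section Step.
Variables (h : history G) (L : history GP) (pend : bool).
Hypotheses (Hshadow : shadow h = (L, pend)) (Hinv : shadows h L pend).
Local Notation next b := (h ++ [(lift_alice h, b) : round G]).

Lemma lift_alice_shadow : lift_alice h = if pend then mark_endpoint h else lift_move h (sAG L).
Proof. unfold lift_alice; now rewrite Hshadow. Qed.

Lemma next_vmarked b v : vmarked L v \/ sAG L = Some v -> vmarked (next b) (emb v).
Proof.
  intros Hv; apply vmarked_snoc; simpl.
  destruct (classic (vmarked h (emb v))) as [Hm|Hm]; [now left|right].
  destruct Hv as [Hv|Hv]; [exfalso; apply Hm, (shadow_vmarked _ _ _ Hinv); now left|].
  rewrite lift_alice_shadow; destruct pend.
  - exfalso; apply Hm, (shadow_vmarked _ _ _ Hinv); now right.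
  - unfold lift_move; rewrite Hv; destruct (excluded_middle_informative _); tauto.
Qed.

Lemma next_out_unmarked b v : ~ vmarked (next b) (emb v) -> nmarked_out h (emb v) = 0.
Proof.
  intros Hv; assert (Hv0 : ~ vmarked h (emb v)) by (intros Hc; apply Hv, vmarked_snoc; now left).
  pose proof (shadow_out _ _ _ Hinv v Hv0) as Hle; pose proof lift_alice_shadow as Ha.
  destruct pend; [|lia].
  destruct (Nat.eq_dec (out_move (last_edge h) (emb v)) 1) as [E|E];
    [|pose proof (out_move_le1 (last_edge h) (emb v)); lia].
  exfalso; apply Hv, vmarked_snoc; right; simpl; rewrite Ha.
  apply mark_endpoint_marks; auto; exact (proj2_sig v).
Qed.

Lemma shadows_next_inside x y (px : P x) (py : P y) : legalB h (Some (x, y)) ->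
  shadows (next (Some (x, y)))
          (L ++ [(sAG L, Some (exist P x px, exist P y py)) : round GP]) false.
Proof.
  intros Hb; destruct Hinv as [Hreach Hlegal Hvm Hem Hnm Hout].
  set (x' := exist P x px : GP); set (y' := exist P y py : GP).
  assert (Hem' : forall a b, emarked (next (Some (x, y))) (emb a) (emb b) <->
                             emarked (L ++ [(sAG L, Some (x', y')) : round GP]) a b).
  { intros a b; rewrite !emarked_snoc, Hem; simpl.
    split; intros [Hm|(u & w & Hu & E)]; auto; right; injection Hu as <- <-.
    - exists x', y'; split; auto.
      destruct E as [[E1 E2]|[E1 E2]]; [left|right]; split; apply emb_inj; assumption.
    - exists x, y; split; auto; destruct E as [[<- <-]|[<- <-]]; auto. }
  constructor; auto.
  - constructor; auto; split; [exact (proj1 Hb)|].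
    intros Hc; apply (proj2 Hb), (Hem x' y'), Hc.
  - now constructor.
  - intros v [Hv|[[=] _]]; apply vmarked_snoc in Hv as [Hv|Hv]; apply next_vmarked; auto.
  - intros v; rewrite !nmarked_inc_snoc, nmarked_out_snoc, Hnm; simpl.
    rewrite (ind_false (~ (P x /\ P y) /\ _)) by tauto.
    rewrite (ind_iff (x = emb v \/ y = emb v) (x' = v \/ y' = v))
      by (unfold x', y'; now rewrite !emb_exist).
    rewrite Nat.add_0_r, <- !Nat.add_assoc; f_equal; apply Nat.add_comm.
  - intros v Hv; rewrite nmarked_out_snoc, (next_out_unmarked _ v Hv); simpl.
    rewrite ind_false by tauto; lia.
Qed.

Lemma shadows_next_outside x y : legalB h (Some (x, y)) -> ~ (P x /\ P y) ->
  shadows (next (Some (x, y))) L true.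
Proof.
  intros Hb Hxy; destruct Hinv as [Hreach Hlegal Hvm Hem Hnm Hout].
  constructor; auto.
  - now constructor.
  - intros v [Hv|[_ Hv]]; apply next_vmarked; auto.
  - intros a b; rewrite emarked_snoc, <- Hem; simpl; split; [|tauto].
    intros [Hm|(u & w & Hu & E)]; [exact Hm|]; injection Hu as <- <-.
    exfalso; apply Hxy; destruct E as [[-> ->]|[-> ->]]; split; apply (proj2_sig _).
  - intros v; rewrite nmarked_inc_snoc, nmarked_out_snoc, Hnm; simpl.
    rewrite (ind_iff (x = emb v \/ y = emb v) (~ (P x /\ P y) /\ (x = emb v \/ y = emb v)))
      by tauto.
    lia.
  - intros v Hv; rewrite nmarked_out_snoc, (next_out_unmarked _ v Hv), last_edge_snoc; simpl; lia.
Qed.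

Lemma shadows_next_none : legalB h None ->
  shadows (next None) (L ++ [(sAG L, None) : round GP]) false.
Proof.
  intros Hb; destruct Hinv as [Hreach Hlegal Hvm Hem Hnm Hout].
  constructor.
  - constructor; auto; intros a b Hab; apply Hem, Hb, Hab.
  - now constructor.
  - intros v [Hv|[[=] _]]; apply vmarked_snoc in Hv as [Hv|Hv]; apply next_vmarked; auto.
  - intros a b; rewrite !emarked_snoc, Hem; simpl.
    split; intros [Hm|(u & w & [=] & _)]; auto.
  - intros v; rewrite !nmarked_inc_snoc, nmarked_out_snoc, Hnm; simpl; lia.
  - intros v Hv; rewrite nmarked_out_snoc, (next_out_unmarked _ v Hv); simpl; lia.
Qed.

Lemma shadows_next b : legalB h b ->
  shadows (next b) (fst (shadow_step (L, pend) b)) (snd (shadow_step (L, pend) b)).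
Proof.
  destruct b as [[x y]|]; [|apply shadows_next_none].
  intros Hb; unfold shadow_step; simpl.
  destruct (excluded_middle_informative (P x)), (excluded_middle_informative (P y));
    [now apply shadows_next_inside|apply shadows_next_outside; tauto..].
Qed.

End Step.

Lemma shadows_play (sB : BobStrat G) :
  (forall k, let h := play lift_alice sB k in legalB h (sB h (lift_alice h))) ->
  forall r, let h := play lift_alice sB r in shadows h (fst (shadow h)) (snd (shadow h)).
Proof.
  intros Hbob r h; subst h; induction r as [|r IH].
  - constructor; simpl.
    + constructor.
    + constructor.
    + intros v [[b []]|[[=] _]].
    + intros x y; split; intros (a & u & w & [] & _).
    + reflexivity.
    + lia.
  - rewrite play_succ, shadow_snoc; simpl snd.
    destruct (shadow (play lift_alice sB r)) as [L pend] eqn:Hs.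
    apply shadows_next; [exact Hs|exact IH|apply Hbob].
Qed.

Section Score.
Variable n : nat.
Hypothesis n_pos : 1 <= n.
Hypothesis deg_outside : forall v : G, ~ P v -> deg_lt G v n.
Hypothesis keeps_below : keeps_below_by sAG n.

Lemma shadows_vscore_lt h L pend w : shadows h L pend -> vscore h w < n.
Proof.
  intros [Hreach Hlegal Hvm Hem Hnm Hout].
  destruct (classic (P w)) as [pw|npw].
  2: pose proof (nmarked_inc_lt_deg h w n Hlegal (deg_outside w npw));
     pose proof (vscore_le h w); lia.
  destruct (classic (vmarked h w)) as [Hm|Hm]; [rewrite vscore_marked by exact Hm; lia|].
  set (v := exist P w pw : GP); change w with (emb v) in Hm |- *.
  rewrite vscore_unmarked, Hnm by exact Hm; specialize (Hout v Hm); destruct pend.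
  - assert (Hv : ~ vmarked (L ++ [(sAG L, None) : round GP]) v).
    { intros Hc; apply vmarked_snoc in Hc; apply Hm, Hvm; simpl in Hc; tauto. }
    pose proof (reachable_nmarked_afterA sAG n keeps_below L v Hreach Hv).
    pose proof (out_move_le1 (last_edge h) (emb v)); lia.
  - assert (Hv : ~ vmarked L v) by (intros Hc; apply Hm, Hvm; now left).
    pose proof (reachable_nmarked sAG n keeps_below L v n_pos Hreach Hv); lia.
Qed.

End Score.

End LiftAlice.

Lemma bob_wins_lt n s : 1 <= n -> (forall v : G, ~ P v -> deg_lt G v n) ->
  alice_keeps_below GP n -> bob_wins G s -> s < n.
Proof.
  intros Hn Hdeg [sAG HsAG] [sB HsB].
  destruct (HsB (lift_alice sAG)) as [Hleg Hwin].
  assert (Hbob : forall k, let h := play (lift_alice sAG) sB k in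
                           legalB h (sB h (lift_alice sAG h)))
    by (intros k; apply Hleg; intros; apply lift_alice_legal).
  destruct (Hwin (fun k => lift_alice_legal sAG _)) as (r & w & Hw).
  pose proof (shadows_vscore_lt sAG n Hn Hdeg (fun sB r Hk => proj2 (HsAG sB r Hk))
                _ _ _ w (shadows_play sAG sB Hbob r)).
  lia.
Qed.

End Induced.

Theorem theorem4p3 (G' : graph) (P : G' -> Prop) (n : nat) :
  (forall v : G', ~ P v -> deg_lt G' v n) ->
  col_ve_is (induced G' P) n ->
  alice_keeps_below (induced G' P) n ->
  col_ve_is G' n.
Proof.
  intros Hdeg (m & -> & Hbob & _) Hkeeps.
  exists m; split; [reflexivity|split].
  - exact (bob_wins_lift G' P m Hbob).
  - intros s Hs; pose proof (bob_wins_lt G' P (m + 1) s ltac:(lia) Hdeg Hkeeps Hs); lia.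
Qed.
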